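(* For $n\ge 1$, the number of shallow $231$-avoiding centrosymmetric permutations in $S_n$ equals $2^{\lfloor n/2\rfloor}$ (in fact every $231$-avoiding centrosymmetric permutation is shallow).
   Context: For $\pi\in S_n$: $D(\pi)=\sum_{i}|\pi_i-i|$, $I(\pi)$ is the number of inversions, $T(\pi)=n-\mathrm{cyc}(\pi)$ with $\mathrm{cyc}$ the number of cycles in the disjoint cycle decomposition; $\pi$ is shallow if $I(\pi)+T(\pi)=D(\pi)$. A permutation avoids a pattern $\sigma$ if it has no subsequence order-isomorphic to $\sigma$. The reverse-complement $\pi^{rc}$ is defined by $\pi^{rc}_{n+1-i}=n+1-\pi_i$; $\pi$ is centrosymmetric if $\pi=\pi^{rc}$. *)

From mathcomp Require Import all_boot all_order all_fingroup.
Set Implicit Arguments. Unset Strict Implicit. Unset Printing Implicit Defensive.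

Section PermStats.
Variable n : nat.

Definition absdiff (a b : nat) : nat := (a - b) + (b - a).

(* D(pi) = sum_i |pi_i - i|  (0-indexed; the shift does not change differences) *)
Definition Dstat (s : 'S_n) : nat := \sum_(i < n) absdiff (s i) i.

Definition Istat (s : 'S_n) : nat :=
  #|[set p : 'I_n * 'I_n | (p.1 < p.2) && (s p.2 < s p.1)]|.

(* cyc(pi) = number of cycles (fixed points count as 1-cycles) *)
Definition cyc (s : 'S_n) : nat := #|porbits s|.

Definition Tstat (s : 'S_n) : nat := n - cyc s.

Definition shallow (s : 'S_n) : bool := Istat s + Tstat s == Dstat s.

Definition avoids231 (s : 'S_n) : bool :=
  [forall i : 'I_n, forall j : 'I_n, forall k : 'I_n,
     ~~ [&& i < j, j < k, s k < s i & s i < s j]].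

(* reverse-complement: pi^rc_{n+1-i} = n+1-pi_i, i.e. (0-indexed)
   pi^rc (rev_ord i) = rev_ord (pi i); centrosymmetric iff pi = pi^rc *)
Definition centrosymmetric (s : 'S_n) : bool :=
  [forall i : 'I_n, s (rev_ord i) == rev_ord (s i)].

End PermStats.

From mathcomp Require Import all_boot all_order all_fingroup zify.
Set Implicit Arguments. Unset Strict Implicit. Unset Printing Implicit Defensive.

(* A permutation avoiding both 231 and 312 is layered: if the cuts of s are the
   c with s([0,c)) = [0,c), then s reverses every block between consecutive cuts.
   A centrosymmetric 231-avoider also avoids 312 (the reverse-complement of 231
   is 312), so it is the layered permutation of a cut set symmetric under
   c |-> n - c, and such a cut set is an arbitrary subset of {1, ..., n/2}
   mirrored, giving 2^(n/2) permutations.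
   Layered permutations are shallow: they are involutions, so 2T is the number N
   of non-fixed points, and for each pair x, y the number of inversions among
   {x, y} equals the number of times one of them lies strictly between the other
   and its image, plus [y = s x <> x].  Summing over all pairs gives
   2I = 2(D - N) + N, i.e. I + T = D. *)

Lemma involution_nonfixed_porbits (T : finType) (p : {perm T}) :
  involutive p -> \sum_x (p x != x) + 2 * #|porbits p| = 2 * #|T|.
Proof.
move=> pK.
have orbitE x : porbit p x = [set x; p x].
  apply/setP => y; apply/porbitP/set2P => [[i ->]|[->|->]].
  - elim: i => [|i [IH|IH]]; first by left; rewrite expg0 perm1.
      by right; rewrite expgSr permM IH.
    by left; rewrite expgSr permM IH pK.
  - by exists 0; rewrite expg0 perm1.
  - by exists 1; rewrite expg1.
have orbit_sum F : \sum_x F x = \sum_(O in porbits p) \sum_(x in O) F x :> nat.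
  rewrite (partition_big_imset (porbit p)) /=; apply: eq_bigr => O /imsetP[y _ ->].
  by apply: eq_bigl => x; rewrite eq_porbit_mem.
rewrite -[#|T|]sum1_card orbit_sum [X in _ = 2 * X]orbit_sum -sum1_card.
rewrite !big_distrr -big_split /=; apply: eq_bigr => _ /imsetP[y _ ->].
rewrite orbitE; case: (eqVneq (p y) y) => [fixy|movy].
  by rewrite fixy setUid !big_set1 fixy eqxx.
by rewrite !big_setU1 ?inE 1?eq_sym //= !big_set1 pK eq_sym movy.
Qed.

Section ShallowCriterion.
Variables (n : nat) (s : 'S_n).

Definition inversion (x y : 'I_n) : bool := (x < y) && (s y < s x).

Definition strictly_between (x y : 'I_n) : bool :=
  ((x < y) && (y < s x)) || ((s x < y) && (y < x)).

Definition image_if_moved (x y : 'I_n) : bool := (y == s x :> nat) && (s x != x :> nat).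

Lemma count_open_interval a b m :
  \sum_(y < m) ((a < y) && (y < b)) = minn m b - a.+1.
Proof.
elim: m => [|m IH]; first by rewrite big_ord0; lia.
by rewrite big_ord_recr /= IH; lia.
Qed.

Lemma sum_strictly_between (x : 'I_n) :
  \sum_y strictly_between x y + (s x != x :> nat) = absdiff (s x) x.
Proof.
have -> : \sum_y strictly_between x y =
    \sum_(y < n) ((x < y) && (y < s x)) + \sum_(y < n) ((s x < y) && (y < x)).
  rewrite -big_split /=; apply: eq_bigr => y _; rewrite /strictly_between; lia.
rewrite !count_open_interval /absdiff; have := ltn_ord x; have := ltn_ord (s x); lia.
Qed.

Lemma sum_image_if_moved (x : 'I_n) : \sum_y image_if_moved x y = (s x != x :> nat).
Proof.
rewrite (bigD1 (s x)) //= /image_if_moved eqxx big1 ?addn0 // => y.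
by rewrite -(inj_eq val_inj) => /negbTE ->.
Qed.

Lemma Istat_sum : Istat s = \sum_x \sum_y inversion x y.
Proof.
rewrite /Istat -sum1_card big_mkcond pair_big /=.
by apply: eq_bigr => -[x y] _; rewrite inE /inversion; case: (_ && _).
Qed.

Lemma Dstat_sum :
  Dstat s = \sum_x \sum_y strictly_between x y + \sum_(x < n) (s x != x :> nat).
Proof. by rewrite /Dstat -big_split; apply: eq_bigr => x _; rewrite -sum_strictly_between. Qed.

Lemma Tstat_involution : involutive s -> (Tstat s).*2 = \sum_(x < n) (s x != x :> nat).
Proof.
move/involution_nonfixed_porbits; rewrite card_ord /Tstat /cyc.
have -> : \sum_x (s x != x) = \sum_(x < n) (s x != x :> nat) by [].
lia.
Qed.

Lemma shallow_of_pair_identity : involutive s ->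
  (forall x y, inversion x y + inversion y x =
               strictly_between x y + strictly_between y x + image_if_moved x y) ->
  shallow s.
Proof.
move=> sK pair_id.
have inversions2 : \sum_x \sum_y (inversion x y + inversion y x) = (Istat s).*2.
  rewrite Istat_sum -addnn [X in _ = _ + X]exchange_big -big_split /=.
  by apply: eq_bigr => x _; rewrite big_split.
have between2 : \sum_x \sum_y
    (strictly_between x y + strictly_between y x + image_if_moved x y) =
    (\sum_x \sum_y strictly_between x y).*2 + \sum_(x < n) (s x != x :> nat).
  rewrite -addnn [X in _ = _ + X + _]exchange_big -!big_split /=.
  by apply: eq_bigr => x _; rewrite !big_split sum_image_if_moved.
rewrite (eq_bigr _ (fun x _ => eq_bigr _ (fun y _ => pair_id x y))) between2 in inversions2.
by have := Tstat_involution sK; rewrite /shallow Dstat_sum => ?; apply/eqP; lia.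
Qed.

End ShallowCriterion.

Definition is_cut n (s : 'S_n) (c : nat) : bool := [forall x : 'I_n, (x < c) == (s x < c)].

Section Cuts.
Variables (n : nat) (s : 'S_n).

Lemma is_cutP c : is_cut s c -> forall x : 'I_n, (x < c) = (s x < c).
Proof. by move=> /forallP cut_c x; apply: eqP (cut_c x). Qed.

Lemma is_cut0 : is_cut s 0.
Proof. exact/forallP. Qed.

Lemma is_cut_ge c : n <= c -> is_cut s c.
Proof. by move=> nc; apply/forallP => x; rewrite !(leq_trans _ nc). Qed.

End Cuts.

Section CutBlocks.
Variables (n : nat) (C : nat -> bool).
Hypotheses (C0 : C 0) (C_ge : forall c, n <= c -> C c).

Lemma prev_cut_ex x : exists c, C c && (c <= x).
Proof. by exists 0; rewrite C0. Qed.

Lemma prev_cut_ub x c : C c && (c <= x) -> c <= x.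
Proof. by case/andP. Qed.

Definition prev_cut x := ex_maxn (prev_cut_ex x) (@prev_cut_ub x).

Lemma next_cut_ex x : exists c, C c && (x < c).
Proof. by exists (maxn n x.+1); rewrite C_ge ?leq_maxl //= leq_max ltnSn orbT. Qed.

Definition next_cut x := ex_minn (next_cut_ex x).

Lemma prev_cutP x :
  [/\ C (prev_cut x), prev_cut x <= x & forall c, C c -> c <= x -> c <= prev_cut x].
Proof.
rewrite /prev_cut; case: ex_maxnP => c /andP[Cc cx] max_c.
by split=> // d Cd dx; apply: max_c; rewrite Cd dx.
Qed.

Lemma next_cutP x :
  [/\ C (next_cut x), x < next_cut x & forall c, C c -> x < c -> next_cut x <= c].
Proof.
rewrite /next_cut; case: ex_minnP => c /andP[Cc xc] min_c.
by split=> // d Cd xd; apply: min_c; rewrite Cd xd.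
Qed.

Lemma next_cut_le x : x < n -> next_cut x <= n.
Proof. by move=> xn; case: (next_cutP x) => _ _ ->; rewrite ?C_ge. Qed.

Lemma no_cut_in_block x c : prev_cut x < c < next_cut x -> ~~ C c.
Proof.
case: (prev_cutP x) (next_cutP x) => _ _ max_prev [_ _ min_next].
move=> /andP[lc cr]; apply/negP => Cc.
by case: (leqP c x) => cx; [have := max_prev _ Cc cx | have := min_next _ Cc cx]; lia.
Qed.

Lemma block_of_cuts a b y : a <= y < b -> C a -> C b ->
  (forall c, a < c < b -> ~~ C c) -> prev_cut y = a /\ next_cut y = b.
Proof.
move=> /andP[ay yb] Ca Cb no_cut.
case: (prev_cutP y) (next_cutP y) => Cp py max_p [Cn yn min_n].
have ap := max_p _ Ca ay; have nb := min_n _ Cb yb.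
split; apply/eqP; rewrite eqn_leq ?ap ?nb ?andbT //.
  by apply: contraLR Cp; rewrite -ltnNge => pa; apply: no_cut; lia.
by apply: contraLR Cn; rewrite -ltnNge => bn; apply: no_cut; lia.
Qed.

Lemma block_of_prev_cut x : prev_cut (prev_cut x) = prev_cut x /\
                            next_cut (prev_cut x) = next_cut x.
Proof.
case: (prev_cutP x) (next_cutP x) => Cp px _ [Cn xn _].
by apply: block_of_cuts (@no_cut_in_block x) => //; lia.
Qed.

Lemma blocks_eq_or_apart x y :
  (prev_cut x = prev_cut y /\ next_cut x = next_cut y) \/
  next_cut x <= prev_cut y \/ next_cut y <= prev_cut x.
Proof.
wlog xy : x y / x <= y.
  by move=> wlog; case: (leqP x y) => [/wlog|/ltnW/wlog]; last case=> [[-> ->]|[]]; auto.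
case: (prev_cutP x) (next_cutP x) (prev_cutP y) => Cpx px _ [Cnx xn _] [_ _ max_py].
case: (ltnP y (next_cut x)) => [yn|ny]; last by right; left; apply: max_py.
have [-> ->] := block_of_cuts (a := prev_cut x) (b := next_cut x) (y := y)
  ltac:(lia) Cpx Cnx (@no_cut_in_block x).
by left.
Qed.

Lemma lt_cut_next x c : C c -> (x < c) = (next_cut x <= c).
Proof.
case: (next_cutP x) => _ xn min_n Cc; apply/idP/idP => [/(min_n _ Cc) //|].
exact: leq_trans.
Qed.

Definition block_rev x := prev_cut x + next_cut x - 1 - x.

Lemma block_rev_in_block x : prev_cut x <= block_rev x < next_cut x.
Proof. by case: (prev_cutP x) (next_cutP x) => _ px _ [_ xn _]; rewrite /block_rev; lia. Qed.

Lemma block_rev_block x :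
  prev_cut (block_rev x) = prev_cut x /\ next_cut (block_rev x) = next_cut x.
Proof.
case: (prev_cutP x) (next_cutP x) => Cp _ _ [Cn _ _].
exact: block_of_cuts (block_rev_in_block x) Cp Cn (@no_cut_in_block x).
Qed.

Lemma block_revK : involutive block_rev.
Proof.
move=> x; have [pE nE] := block_rev_block x; rewrite {1}/block_rev pE nE.
have := block_rev_in_block x; case: (prev_cutP x) (next_cutP x) => _ px _ [_ xn _].
by rewrite /block_rev; lia.
Qed.

Lemma block_rev_lt x : x < n -> block_rev x < n.
Proof. by move=> xn; have := block_rev_in_block x; have := next_cut_le xn; lia. Qed.

Definition layered_fun (x : 'I_n) : 'I_n := Ordinal (block_rev_lt (ltn_ord x)).

Lemma layered_fun_inj : injective layered_fun.
Proof. by move=> x y /(congr1 (block_rev \o val)) /=; rewrite !block_revK => /val_inj. Qed.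

Definition layered : 'S_n := perm layered_fun_inj.

Lemma layeredE x : layered x = block_rev x :> nat.
Proof. by rewrite permE. Qed.

Lemma layeredK : involutive layered.
Proof. by move=> x; apply: val_inj => /=; rewrite !layeredE block_revK. Qed.

Lemma is_cut_layered c : is_cut layered c = C c.
Proof.
case Cc: (C c).
  apply/forallP => x; rewrite layeredE !(lt_cut_next _ Cc).
  by have [_ ->] := block_rev_block x.
have cn : c < n by rewrite ltnNge; apply: contraFN Cc => /C_ge.
case: (prev_cutP c) (next_cutP c) => Cp pc _ [_ cnext _].
have pn : prev_cut c < n by lia.
apply/negbTE/forallP => /(_ (Ordinal pn)); rewrite layeredE /block_rev /=.
have [-> ->] := block_of_prev_cut c.
have pc' : prev_cut c < c by rewrite ltn_neqAle pc andbT; apply: contraFN Cc => /eqP <-.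
by rewrite pc'; lia.
Qed.

Lemma layered_avoids231 : avoids231 layered.
Proof.
apply/forallP => i; apply/forallP => j; apply/forallP => k; apply/negP.
rewrite !layeredE => /and4P[ij jk ki ij'].
have := block_rev_in_block i; have := block_rev_in_block j; have := block_rev_in_block k.
case: (prev_cutP j) (prev_cutP k) => Cj pj _ [_ pk max_pk].
have := max_pk _ Cj (leq_trans pj (ltnW jk)); have := blocks_eq_or_apart i j.
move: ki ij'; rewrite /block_rev; case: (next_cutP i) => _ inext _.
case: (next_cutP j) => _ jnext _; case: (prev_cutP i) => _ pi _; lia.
Qed.

Lemma pair_identity_nat x y sx sy :
  [\/ sx + x = sy + y, maxn x sx < minn y sy | maxn y sy < minn x sx] ->
  ((x < y) && (sy < sx)) + ((y < x) && (sx < sy)) =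
  ((x < y) && (y < sx) || (sx < y) && (y < x)) +
  ((y < x) && (x < sy) || (sy < x) && (x < y)) + ((y == sx) && (sx != x)).
Proof. by case=> h; case: (ltngtP x y) => ?; case: (ltngtP y sx) => ?; lia. Qed.

Lemma layered_shallow : shallow layered.
Proof.
apply: shallow_of_pair_identity layeredK _ => x y.
rewrite /inversion /strictly_between /image_if_moved !layeredE; apply: pair_identity_nat.
have := block_rev_in_block x; have := block_rev_in_block y.
move=> /andP[? ?] /andP[? ?]; case: (blocks_eq_or_apart x y) => [[px nx]|[apart|apart]].
- case: (next_cutP x) (next_cutP y) => _ ? _ [_ ? _]; apply: Or31; rewrite /block_rev; lia.
- case: (next_cutP x) (prev_cutP y) => _ ? _ [_ ? _]; apply: Or32; lia.
- case: (next_cutP y) (prev_cutP x) => _ ? _ [_ ? _]; apply: Or33; lia.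
Qed.

Lemma layered_centrosymmetric :
  (forall c, c <= n -> C (n - c) = C c) -> centrosymmetric layered.
Proof.
move=> C_sym; apply/forallP => x; apply/eqP/val_inj => /=; rewrite !layeredE /block_rev.
have xn := ltn_ord x; have nn := next_cut_le xn.
case: (prev_cutP x) (next_cutP x) => Cp px _ [Cn xnext _].
have no_cut c : n - next_cut x < c < n - prev_cut x -> ~~ C c.
  by move=> cI; rewrite -C_sym; [apply: (@no_cut_in_block x) |]; lia.
have [-> ->] := block_of_cuts (a := n - next_cut x) (b := n - prev_cut x)
  (y := n - x.+1) ltac:(lia) ltac:(by rewrite C_sym) ltac:(by rewrite C_sym; lia) no_cut.
by rewrite /=; lia.
Qed.

End CutBlocks.

Section Avoiders.
Variables (n : nat) (s : 'S_n).
Hypothesis no231 : forall i j k : 'I_n, i < j -> j < k -> s k < s i -> s i < s j -> False.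
Hypothesis no312 : forall i j k : 'I_n, i < j -> j < k -> s j < s k -> s k < s i -> False.

Lemma inversion_between_values (i j k : 'I_n) :
  i < j -> s j < s i -> i < k < j -> s j < s k < s i.
Proof.
move=> ij ji /andP[ik kj].
case: (ltngtP (s k) (s i)) => [ki|ik'|/val_inj/perm_inj ki]; last by move: ik; rewrite ki ltnn.
  by case: (ltngtP (s j) (s k)) => [//|kj'|/val_inj/perm_inj jk];
    [case: (no312 ik kj kj' ji) | move: kj; rewrite jk ltnn].
by case: (no231 ik kj ji ik').
Qed.

Lemma inversion_between_positions (i j k : 'I_n) :
  i < j -> s j < s i -> s j < s k < s i -> i < k < j.
Proof.
move=> ij ji /andP[jk ki].
case: (ltngtP k i) => [k_i|ik|/val_inj ki']; last by move: ki; rewrite ki' ltnn.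
  by case: (no231 k_i ij jk ki).
case: (ltngtP k j) => [//|jk'|/val_inj kj]; last by move: jk; rewrite kj ltnn.
by case: (no312 ij jk' jk ki).
Qed.

(* s maps the positions strictly between i and j onto the values strictly between
   s j and s i, so both ranges have the same length. *)
Lemma inversion_sum (i j : 'I_n) : i < j -> s j < s i -> s i + i = s j + j.
Proof.
move=> ij ji.
have same_count : \sum_(k < n) ((i < k) && (k < j)) =
                  \sum_(k < n) ((s j < k) && (k < s i)).
  rewrite [RHS](reindex_inj (@perm_inj _ s)); apply: eq_bigr => k _; congr nat_of_bool.
  by apply/idP/idP; [exact: inversion_between_values | exact: inversion_between_positions].
move: same_count; rewrite !count_open_interval.
by have := ltn_ord j; have := ltn_ord (s i); lia.
Qed.

Lemma reversal_below_cut b (p : 'I_n) : is_cut s b -> s p = b.-1 :> nat ->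
  forall k : 'I_n, p <= k < b -> s k = b.-1 + p - k :> nat.
Proof.
move=> cut_b sp k /andP[pk kb].
case: (ltngtP p k) pk => // [pk _|/val_inj <- _]; last by rewrite sp; lia.
have skb : s k < b by rewrite -(is_cutP cut_b).
have : s k != s p :> nat by rewrite (inj_eq val_inj) (inj_eq perm_inj) neq_ltn pk orbT.
by have := inversion_sum pk; lia.
Qed.

(* By the reversal, s maps [p, b) onto itself; since it maps [0, b) onto itself,
   it maps [0, p) onto itself as well. *)
Lemma is_cut_preimage b (p : 'I_n) : 0 < b -> is_cut s b -> s p = b.-1 :> nat -> is_cut s p.
Proof.
move=> b0 cut_b sp; have rev := reversal_below_cut cut_b sp.
have pb : p < b by rewrite (is_cutP cut_b) sp; lia.
apply/forallP => x; apply/eqP; case: (ltnP x p) => [xp|px]; last first.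
  case: (ltnP x b) => [xb|bx]; first by rewrite rev ?px //; lia.
  apply/esym/negbTE; rewrite -leqNgt (leq_trans (ltnW pb)) //.
  by rewrite leqNgt -(is_cutP cut_b) -leqNgt.
apply/esym; rewrite ltnNge; apply/negP => psx.
have sxb : s x < b by rewrite -(is_cutP cut_b) (leq_trans xp) // ltnW.
have kn : b.-1 + p - s x < n by have := ltn_ord (s p); rewrite sp; lia.
have /rev skE : p <= Ordinal kn < b by rewrite /=; lia.
have : s (Ordinal kn) == s x :> nat by rewrite skE /=; apply/eqP; lia.
by rewrite (inj_eq val_inj) (inj_eq perm_inj) => /eqP kx; move: xp; rewrite -kx /=; lia.
Qed.

Lemma block_reversal a b (i : 'I_n) : a <= i < b -> is_cut s a -> is_cut s b ->
  (forall c, a < c < b -> ~~ is_cut s c) -> s i = a + b - 1 - i :> nat.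
Proof.
move=> /andP[ai ib] cut_a cut_b no_cut.
have bn : b <= n.
  rewrite leqNgt; apply/negP => nb.
  by have /negP[] := no_cut n ltac:(have := ltn_ord i; lia); apply: is_cut_ge.
have b1n : b.-1 < n by lia.
pose p := (s^-1)%g (Ordinal b1n).
have sp : s p = b.-1 :> nat by rewrite permKV.
have cut_p := is_cut_preimage (leq_ltn_trans (leq0n i) ib) cut_b sp.
have ap : a <= p by rewrite leqNgt (is_cutP cut_a) sp; lia.
have pb : p < b by rewrite (is_cutP cut_b) sp; lia.
have pa : nat_of_ord p = a.
  apply/eqP; rewrite eqn_leq ap andbT leqNgt; apply/negP => a_p.
  by have /negP := no_cut p ltac:(lia).
by rewrite (reversal_below_cut cut_b sp) ?pa ?ai //; lia.
Qed.

Lemma avoider_eq_layered (C : nat -> bool) (C0 : C 0) (C_ge : forall c, n <= c -> C c) :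
  C =1 is_cut s -> s = layered C0 C_ge.
Proof.
move=> Cs; apply/permP => i; apply/val_inj => /=; rewrite layeredE /block_rev.
case: (prev_cutP C0 i) (next_cutP C_ge i) => Cp pi _ [Cn inext _].
apply: block_reversal; rewrite -?Cs ?pi ?inext // => c cI.
by rewrite -Cs; apply: no_cut_in_block cI.
Qed.

End Avoiders.

Section Centrosymmetric.
Variable n : nat.
Implicit Type s : 'S_n.

Lemma avoids231P s : avoids231 s ->
  forall i j k : 'I_n, i < j -> j < k -> s k < s i -> s i < s j -> False.
Proof.
move=> /forallP av i j k ij jk ki ij'.
by move: (av i) => /forallP /(_ j) /forallP /(_ k); rewrite ij jk ki ij'.
Qed.

Lemma centrosymmetricP s : centrosymmetric s ->
  forall x : 'I_n, s (rev_ord x) = n - (s x).+1 :> nat.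
Proof. by move=> /forallP cs x; rewrite (eqP (cs x)). Qed.

Lemma avoids312_centrosymmetric s : avoids231 s -> centrosymmetric s ->
  forall i j k : 'I_n, i < j -> j < k -> s j < s k -> s k < s i -> False.
Proof.
move=> /avoids231P av /centrosymmetricP cs i j k ij jk jk' ki.
apply: (av (rev_ord k) (rev_ord j) (rev_ord i)); rewrite /= ?cs;
  have := ltn_ord i; have := ltn_ord k; have := ltn_ord (s i); have := ltn_ord (s k); lia.
Qed.

Lemma centrosymmetric_layered s : avoids231 s -> centrosymmetric s ->
  s = layered (is_cut0 s) (@is_cut_ge _ s).
Proof.
move=> av cs; apply: avoider_eq_layered => //; first exact: avoids231P.
exact: avoids312_centrosymmetric.
Qed.

Lemma shallow_avoids231_centrosymmetric s :
  avoids231 s -> centrosymmetric s -> shallow s.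
Proof. by move=> av cs; rewrite (centrosymmetric_layered av cs); apply: layered_shallow. Qed.

Lemma is_cut_complement s c : centrosymmetric s -> c <= n -> is_cut s (n - c) = is_cut s c.
Proof.
move=> /centrosymmetricP cs cn.
suff cut_sym d : d <= n -> is_cut s d -> is_cut s (n - d).
  by apply/idP/idP => [/cut_sym|/cut_sym]; rewrite ?subKn ?leq_subr //; apply.
move=> dn /is_cutP cut_d; apply/forallP => x; apply/eqP.
have := cut_d (rev_ord x); rewrite cs /=.
by have := ltn_ord x; have := ltn_ord (s x); lia.
Qed.

Definition half_cuts s : {ffun 'I_n./2 -> bool} := [ffun t : 'I_n./2 => is_cut s t.+1].

Lemma half_cuts_inj s1 s2 : avoids231 s1 -> centrosymmetric s1 ->
  avoids231 s2 -> centrosymmetric s2 -> half_cuts s1 = half_cuts s2 -> s1 = s2.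
Proof.
move=> av1 cs1 av2 cs2 eq_half.
have low_cuts c : 0 < c <= n./2 -> is_cut s1 c = is_cut s2 c.
  move=> /andP[c0 ch]; have t_lt : c.-1 < n./2 by lia.
  by move/ffunP/(_ (Ordinal t_lt)): eq_half; rewrite !ffunE /= prednK.
have same_cuts c : is_cut s1 c = is_cut s2 c.
  case: (posnP c) => [->|c0]; first by rewrite !is_cut0.
  case: (leqP n c) => [nc|cn]; first by rewrite !is_cut_ge.
  case: (leqP c n./2) => ch; first by apply: low_cuts; rewrite c0.
  rewrite -(is_cut_complement cs1 (ltnW cn)) -(is_cut_complement cs2 (ltnW cn)).
  by apply: low_cuts; have := odd_double_half n; lia.
rewrite (centrosymmetric_layered av1 cs1); apply/esym/avoider_eq_layered => //.
- exact: avoids231P.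
- exact: avoids312_centrosymmetric.
Qed.

Section Palindromic.
Variable v : {ffun 'I_n./2 -> bool}.

(* For 0 < c < n, c and n - c are cuts exactly when v says so at min(c, n - c) - 1. *)
Definition palindromic_cut c :=
  [|| c == 0, n <= c | nth false (fgraph v) (minn c (n - c)).-1].

Lemma palindromic_cut0 : palindromic_cut 0.
Proof. by []. Qed.

Lemma palindromic_cut_ge c : n <= c -> palindromic_cut c.
Proof. by rewrite /palindromic_cut => ->; rewrite orbT. Qed.

Lemma palindromic_cut_complement c : c <= n -> palindromic_cut (n - c) = palindromic_cut c.
Proof.
by move=> cn; rewrite /palindromic_cut subKn // minnC !orbA; congr (_ || _); lia.
Qed.

Definition palindromic_layered : 'S_n := layered palindromic_cut0 palindromic_cut_ge.

Lemma half_cuts_palindromic_layered : half_cuts palindromic_layered = v.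
Proof.
apply/ffunP => t; rewrite ffunE is_cut_layered /palindromic_cut.
have := ltn_ord t; have := odd_double_half n => nE tn.
have -> : n <= t.+1 = false by lia.
have -> : (minn t.+1 (n - t.+1)).-1 = t by lia.
exact: nth_fgraph_ord.
Qed.

End Palindromic.

Lemma card_avoids231_centrosymmetric :
  #|[set s : 'S_n | avoids231 s && centrosymmetric s]| = 2 ^ n./2.
Proof.
rewrite -(card_in_imset (f := half_cuts)); last first.
  by move=> s1 s2; rewrite !inE => /andP[av1 cs1] /andP[av2 cs2]; apply: half_cuts_inj.
have -> : half_cuts @: [set s : 'S_n | avoids231 s && centrosymmetric s] = setT.
  apply/setP => v; rewrite inE; apply/imsetP; exists (palindromic_layered v).
    rewrite inE layered_avoids231 layered_centrosymmetric //.
    exact: palindromic_cut_complement.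
  by rewrite half_cuts_palindromic_layered.
by rewrite cardsT card_ffun card_bool card_ord.
Qed.

End Centrosymmetric.

Theorem theorem4p7 (n : nat) (hn : 1 <= n) :
  #|[set s : 'S_n | shallow s && avoids231 s && centrosymmetric s]| = 2 ^ n./2
  /\ (forall s : 'S_n, avoids231 s -> centrosymmetric s -> shallow s).
Proof.
split; last exact: shallow_avoids231_centrosymmetric.
rewrite -card_avoids231_centrosymmetric; apply: eq_card => s; rewrite !inE -andbA.
by apply/andP/idP => [[_ //]|/andP[av cs]]; rewrite shallow_avoids231_centrosymmetric ?av.
Qed.
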